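(* Let $A,B$ be invertible square complex matrices such that $ABA^{-1}B^{-1}-I$ has rank at most $1$. Then there is a basis in which $A$ and $B$ are both upper triangular. *)

From HB Require Import structures.
From mathcomp Require Import all_boot all_order all_algebra.
From mathcomp Require Import complex.
From mathcomp Require Import reals.
Set Implicit Arguments. Unset Strict Implicit. Unset Printing Implicit Defensive.
Import GRing.Theory Num.Theory.
Local Open Scope ring_scope.

Definition upper_triangular (F : nzRingType) (n : nat) (M : 'M[F]_n) : Prop :=
  forall i j : 'I_n, (j < i)%N -> M i j = 0.

From HB Require Import structures.
From mathcomp Require Import all_boot all_order all_algebra.
From mathcomp Require Import complex.
From mathcomp Require Import reals.

Set Implicit Arguments.
Unset Strict Implicit.
Unset Printing Implicit Defensive.

Import GRing.Theory Num.Theory.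
Local Open Scope ring_scope.
Local Open Scope complex_scope.

(* Laffey's argument: if rank (AB - BA) <= 1 then A and B have a common
   eigenvector.  Let K be an eigenspace of A for a.  If K is B-stable, an
   eigenvector of B in K works.  Otherwise K (AB - BA) is nonzero, hence spans
   the row space of AB - BA; as K (A - a) = 0, that row space lies in the image
   of A - a, which is thus a proper nonzero subspace stable under A and B, and
   one recurses on it.  Deflating a common eigenvector does not increase the
   rank of the commutator, so induction on the dimension triangularizes A and
   B together.  Finally rank (AB - BA) = rank (ABA^-1B^-1 - 1), and
   transposition turns the lower triangular forms given by row eigenvectors
   into upper triangular ones. *)

Definition commmx (R : pzRingType) n (A B : 'M[R]_n) : 'M_n := A *m B - B *m A.

Section CommutatorRank.
Variable F : fieldType.

Lemma mxrank_conjmx m n (V : 'M[F]_(m, n)) (f : 'M_n) :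
  (\rank (conjmx V f) <= \rank f)%N.
Proof. exact: leq_trans (mxrankM_maxl _ _) (mxrankM_maxr _ _). Qed.

Lemma conjmx_commmx m n (V : 'M[F]_(m, n)) (A B : 'M_n) :
  stablemx V A -> stablemx V B ->
  commmx (conjmx V A) (conjmx V B) = conjmx V (commmx A B).
Proof.
by move=> VA VB; rewrite /commmx -!conjmxM ?inE // /conjmx mulmxBr mulmxBl.
Qed.

Lemma mxrank_commmx_conjmx m n (V : 'M[F]_(m, n)) (A B : 'M_n) :
  stablemx V A -> stablemx V B ->
  (\rank (commmx (conjmx V A) (conjmx V B)) <= \rank (commmx A B))%N.
Proof. by move=> VA VB; rewrite conjmx_commmx // mxrank_conjmx. Qed.

Lemma commmx_subr_scalar n (A B : 'M[F]_n) (a : F) :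
  commmx (A - a%:M) B = commmx A B.
Proof.
by rewrite /commmx mulmxBl mulmxBr mul_scalar_mx mul_mx_scalar opprB addrA subrK.
Qed.

Lemma mxrank_commmx_tr n (A B : 'M[F]_n) :
  \rank (commmx A^T B^T) = \rank (commmx A B).
Proof.
by rewrite /commmx -!trmx_mul -linearB /= mxrank_tr -mxrank_opp opprB.
Qed.

Lemma mxrank_commmx_unitmx n (A B : 'M[F]_n) : A \in unitmx -> B \in unitmx ->
  \rank (commmx A B) = \rank (A *m B *m invmx A *m invmx B - 1%:M).
Proof.
move=> Au Bu.
have BAfree : row_free (B *m A) by rewrite row_free_unit unitmx_mul Bu Au.
rewrite -[RHS](mxrankMfree _ BAfree) mulmxBl mul1mx.
by rewrite !mulmxA mulmxKV // mulmxKV.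
Qed.

End CommutatorRank.

Section Deflation.
Variable F : fieldType.

Lemma mxrank_drsubmx m1 m2 n1 n2 (M : 'M[F]_(m1 + m2, n1 + n2)) :
  (\rank (drsubmx M) <= \rank M)%N.
Proof.
rewrite drsubmxEsub.
have -> : mxsub (@rshift _ _) (@rshift _ _) M =
    rowsub (@rshift m1 m2) 1%:M *m (M *m colsub (@rshift n1 n2) 1%:M).
  by rewrite mulmx_colsub mulmx1 -mxsub_mul mul1mx.
exact: leq_trans (mxrankM_maxr _ _) (mxrankM_maxl _ _).
Qed.

Lemma drsubmxM m1 m2 n1 n2 p1 p2 (X : 'M[F]_(m1 + m2, n1 + n2))
    (Y : 'M_(n1 + n2, p1 + p2)) :
  ursubmx Y = 0 -> drsubmx (X *m Y) = drsubmx X *m drsubmx Y.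
Proof.
move=> urY0; rewrite -[X in LHS]submxK -[Y in LHS]submxK mulmx_block.
by rewrite block_mxKdr urY0 mulmx0 add0r.
Qed.

Lemma drsubmx_commmx m n (X Y : 'M[F]_(m + n)) :
  ursubmx X = 0 -> ursubmx Y = 0 ->
  drsubmx (commmx X Y) = commmx (drsubmx X) (drsubmx Y).
Proof.
move=> urX0 urY0; rewrite /commmx -!drsubmxM //.
by apply/matrixP => i j; rewrite !mxE.
Qed.

Lemma usubmx1_mul m n p (A : 'M[F]_(m + n, p)) :
  usubmx (1%:M : 'M_(m + n)) *m A = usubmx A.
Proof. by rewrite mul_usub_mx mul1mx. Qed.

Lemma unitmx_completion m n (U : 'M[F]_(m, m + n)) :
  row_free U -> exists2 P : 'M_(m + n), P \in unitmx & usubmx P = U.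
Proof.
move=> Ufree.
have [|P Pu eP] := @complete_unitmx F m (m + n) (usubmx 1%:M) (col_mx U 0).
  rewrite !usubmx1_mul col_mxKu (eqP Ufree) scalar_mx_block.
  by rewrite block_mxEv col_mxKu rank_row_mx0 mxrank1.
by exists P; rewrite // -usubmx1_mul -eP usubmx1_mul col_mxKu.
Qed.

Lemma ursubmx_conjmx m n (P A : 'M[F]_(m + n)) :
  P \in unitmx -> stablemx (usubmx P) A -> ursubmx (conjmx P A) = 0.
Proof.
move=> Pu /submxP[W PA].
rewrite conjumx // /ursubmx -!mul_usub_mx PA -mulmxA mul_usub_mx mulmxV //.
by rewrite scalar_mx_block block_mxEv col_mxKu mul_mx_row row_mxKr mulmx0.
Qed.

Lemma is_trig_conjmx_block_diag m n (Q : 'M[F]_m) (P : 'M_n) (X : 'M_(m + n)) :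
  Q \in unitmx -> P \in unitmx -> ursubmx X = 0 ->
  is_trig_mx (conjmx Q (ulsubmx X)) -> is_trig_mx (conjmx P (drsubmx X)) ->
  is_trig_mx (conjmx (block_mx Q 0 0 P) X).
Proof.
move=> Qu Pu urX0; rewrite !conjumx ?block_diag_mx_unit ?Qu // => trigUL trigDR.
rewrite invmx_block_diag ?block_diag_mx_unit ?Qu //.
rewrite -[X in block_mx Q 0 0 P *m X]submxK urX0.
rewrite !mulmx_block !(mulmx0, mul0mx, addr0, add0r).
by rewrite is_trig_block_mx // eqxx trigUL trigDR.
Qed.

End Deflation.

Section Laffey.
Variable F : closedFieldType.

Definition common_eigenvector n (A B : 'M[F]_n) : Prop :=
  exists2 v : 'rV_n, v != 0 & stablemx v A && stablemx v B.

Lemma closed_eigenvalue n (A : 'M[F]_n) : (0 < n)%N -> exists a, eigenvalue A a.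
Proof.
move=> n_gt0; have /closed_rootP[a rAa] : size (char_poly A) != 1%N.
  by rewrite size_char_poly; case: n n_gt0 A.
by exists a; rewrite eigenvalue_root_char.
Qed.

Lemma restrictmx_common_eigenvector n (V A B : 'M[F]_n) :
  stablemx V A -> stablemx V B ->
  common_eigenvector (restrictmx V A) (restrictmx V B) -> common_eigenvector A B.
Proof.
move=> VA VB [w w0 /andP[wA wB]]; exists (w *m row_base V).
  by rewrite mulmx_free_eq0 ?row_base_free.
by rewrite -!stablemx_restrict // wA wB.
Qed.

Lemma common_eigenvector_rank_commmx n (A B : 'M[F]_n) : (0 < n)%N ->
  (\rank (commmx A B) <= 1)%N -> common_eigenvector A B.
Proof.
have [N ltnN] := ubnP n; elim: N n ltnN A B => // N IHN n ltnN A B n_gt0 rkC.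
have [a Aa] := closed_eigenvalue A n_gt0.
pose K := eigenspace A a.
have KA : K *m A = a *: K by apply/eigenspaceP.
have KAs : stablemx K A by rewrite KA scalemx_sub.
have [KC0|KCn0] := eqVneq (K *m commmx A B) 0.
  have KBs : stablemx K B.
    apply/eigenspaceP; move/eqP: KC0.
    by rewrite mulmxBr !mulmxA KA -scalemxAl subr_eq0 => /eqP <-.
  apply: restrictmx_common_eigenvector KAs KBs _.
  have [|b /eigenvalueP[w wB w0]] := closed_eigenvalue (restrictmx K B).
    by rewrite lt0n mxrank_eq0.
  exists w; rewrite // wB scalemx_sub // andbT.
  rewrite (conjmx_eigenvalue (a := a)) ?row_base_free ?eq_row_base //.
  by rewrite mul_mx_scalar scalemx_sub.
pose A' := A - a%:M.
have KA'0 : K *m A' = 0 by apply/sub_kermxP.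
have CA' : (commmx A B <= A')%MS.
  have CKC : (commmx A B <= K *m commmx A B)%MS.
    have [_ <-] := mxrank_leqif_sup (submxMl K (commmx A B)).
    rewrite eqn_leq mxrankM_maxr /=.
    by apply: leq_trans rkC _; rewrite lt0n mxrank_eq0.
  apply: submx_trans CKC _.
  rewrite -(commmx_subr_scalar A B a) mulmxBr mulmxA KA'0 mul0mx sub0r mulmxA.
  by rewrite -mulNmx submxMl.
have A'As : stablemx A' A.
  by rewrite (_ : A' *m A = A *m A') ?submxMl // mulmxBl mulmxBr scalar_mxC.
have A'Bs : stablemx A' B.
  have -> : A' *m B = B *m A' + commmx A B.
    by rewrite -(commmx_subr_scalar A B a) addrC subrK.
  by rewrite addmx_sub ?submxMl.
apply: (restrictmx_common_eigenvector A'As A'Bs).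
apply: IHN.
- apply: (leq_trans _ (ltnSE ltnN)).
  rewrite -subn_gt0 -mxrank_ker lt0n mxrank_eq0; exact: Aa.
- rewrite lt0n mxrank_eq0; apply: contraNneq KCn0 => A'0.
  rewrite -(commmx_subr_scalar A B a) -/A' A'0 /commmx.
  by rewrite mul0mx mulmx0 subrr mulmx0.
- by apply: leq_trans (mxrank_commmx_conjmx _ _) rkC; rewrite stablemx_row_base.
Qed.

Theorem cotrigonalization_rank_commmx n (A B : 'M[F]_n) :
  (\rank (commmx A B) <= 1)%N ->
  exists2 P : 'M_n, P \in unitmx & similar_trig P A && similar_trig P B.
Proof.
elim: n A B => [|n IHn] A B rkC.
  by exists 1%:M; rewrite ?unitmx1 // /similar_to !conj1mx !flatmx0 mx0_is_trig.
have [v v0 /andP[vA vB]] := common_eigenvector_rank_commmx (ltn0Sn n) rkC.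
have [|P0 P0u P0v] := @unitmx_completion F 1 n v.
  by rewrite /row_free rank_rV v0.
pose A1 : 'M_(1 + n) := conjmx P0 A; pose B1 : 'M_(1 + n) := conjmx P0 B.
have urA1 : ursubmx A1 = 0 by apply: ursubmx_conjmx; rewrite ?P0v.
have urB1 : ursubmx B1 = 0 by apply: ursubmx_conjmx; rewrite ?P0v.
have [|P Pu /andP[PA PB]] := IHn (drsubmx A1) (drsubmx B1).
  rewrite -drsubmx_commmx //; apply: leq_trans (mxrank_drsubmx _) _.
  by apply: leq_trans (mxrank_commmx_conjmx _ _) rkC; rewrite stablemx_unit.
pose Q : 'M_(1 + n) := block_mx 1%:M 0 0 P.
have Qu : Q \in unitmx by rewrite block_diag_mx_unit unitmx1.
exists (Q *m P0); first by rewrite unitmx_mul Qu.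
rewrite /similar_to !conjuMumx // /Q.
by apply/andP; split; apply: (@is_trig_conjmx_block_diag F 1 n);
  rewrite ?unitmx1 ?mx11_is_trig.
Qed.

End Laffey.

Lemma upper_triangular_trmx_conjmx (F : fieldType) n (P X : 'M[F]_n) :
  P \in unitmx -> is_trig_mx (conjmx P X^T) ->
  upper_triangular (invmx P^T *m X *m P^T).
Proof.
move=> Pu /is_trig_mxP trigX i j ji.
have -> : invmx P^T *m X *m P^T = (conjmx P X^T)^T.
  by rewrite conjumx // !trmx_mul !trmxK trmx_inv mulmxA.
by rewrite mxE trigX.
Qed.

Theorem corollary3p3 (R : realType) (n : nat) (A B : 'M[R[i]]_n)
  (hA : A \in unitmx) (hB : B \in unitmx)
  (hrk : (\rank (A *m B *m invmx A *m invmx B - 1%:M)%R <= 1)%N) :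
  exists2 P : 'M[R[i]]_n, P \in unitmx &
    upper_triangular (invmx P *m A *m P) /\ upper_triangular (invmx P *m B *m P).
Proof.
have rkT : (\rank (commmx A^T B^T) <= 1)%N.
  by rewrite mxrank_commmx_tr mxrank_commmx_unitmx.
have [P Pu /andP[PA PB]] := cotrigonalization_rank_commmx rkT.
exists P^T; first by rewrite unitmx_tr.
by split; [exact: upper_triangular_trmx_conjmx Pu PA
          | exact: upper_triangular_trmx_conjmx Pu PB].
Qed.
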